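(* Let $\Gamma$ be a set of clauses with designated blocking variables. Any clause $C\lor\ell$ that is cost-BC w.r.t. $\Gamma$ and $\ell$ is also cost-LPR w.r.t. $\Gamma$.
   Context: Substitutions map variables to $0$, $1$ or literals ($\sigma(\lnot x)=\lnot\sigma(x)$); $(\sigma\circ\tau)(x)=\sigma(\tau(x))$; a partial assignment has $\sigma(x)\in\{0,1,x\}$, domain $\sigma^{-1}(\{0,1\})$; total means all variables assigned. $C{\upharpoonright}_\sigma$: apply $\sigma$ to the literals and simplify; $\Gamma{\upharpoonright}_\sigma$ is the multiset of $C{\upharpoonright}_\sigma\ne1$, $C\in\Gamma$. $\lnot C$ is the partial assignment falsifying all literals of $C$. $\Gamma\vdash_1 C$ means unit propagation on $\Gamma{\upharpoonright}_{\lnot C}$ derives the empty clause; $\Gamma\vdash_1\Delta$ means this for all $D\in\Delta$. $\mathrm{cost}(\alpha)=\sum_i\alpha(b_i)$ over blocking variables $b_i$. $C\lor\ell$ is cost-BC w.r.t. $\Gamma$ and $\ell$ if for every $D\lor\lnot\ell\in\Gamma$, $C\lor D$ is a tautology, and $\ell$ is not a blocking variable with positive polarity. A clause $E$ is cost-LPR w.r.t. $\Gamma$ if there is a partial assignment $\sigma$ with the same domain as $\lnot E$, differing from $\lnot E$ on exactly one variable, such that (1) $\Gamma{\upharpoonright}_{\lnot E}\vdash_1(\Gamma\cup\{E\}){\upharpoonright}_\sigma$ and (2) $\mathrm{cost}(\tau\circ\sigma)\le\mathrm{cost}(\tau)$ for all total $\tau\supseteq\lnot E$. *)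

From mathcomp Require Import all_boot.
Set Implicit Arguments. Unset Strict Implicit. Unset Printing Implicit Defensive.

(* Variables are natural numbers; a literal is a pair (x, p):
   p = true  : the positive literal x,
   p = false : the negative literal ~x. *)
Definition var := nat.
Definition lit := (var * bool)%type.
Definition lvar (l : lit) : var := l.1.
Definition lneg (l : lit) : lit := (l.1, ~~ l.2).

Definition clause := seq lit.
Definition cnf := seq clause.

Definition tautology (C : clause) : bool := has (fun l => lneg l \in C) C.

(* A partial assignment maps a variable to Some b (assigned to b) or to
   None (sigma(x) = x, unassigned).  Its domain is the set of assigned
   variables. *)
Definition pasg := var -> option bool.

Definition lit_val (a : pasg) (l : lit) : option bool :=
  match a l.1 with Some v => Some (v == l.2) | None => None end.

(* C|_a : None stands for the satisfied clause 1; otherwise the clause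
   with the falsified literals removed. *)
Definition restrict_clause (a : pasg) (C : clause) : option clause :=
  if has (fun l => lit_val a l == Some true) C then None
  else Some (filter (fun l => lit_val a l != Some false) C).

Definition restrict (a : pasg) (G : cnf) : cnf := pmap (restrict_clause a) G.

(* ~C : the partial assignment falsifying all literals of the
   (non-tautological) clause C. *)
Definition neg_clause (C : clause) : pasg :=
  fun x => if (x, true) \in C then Some false
           else if (x, false) \in C then Some true else None.

Definition lit_asg (l : lit) : pasg :=
  fun x => if x == l.1 then Some l.2 else None.

Inductive up_refutes : cnf -> Prop :=
| up_conflict F : [::] \in F -> up_refutes F
| up_step F C l : C \in F -> undup C = [:: l] ->
    up_refutes (restrict (lit_asg l) F) -> up_refutes F.

(* Gamma |-_1 D : unit propagation on Gamma|_{~D} derives the empty clause.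
   (A tautological D, for which ~D is undefined, counts as trivially
   implied, as in the usual RUP check.) *)
Definition up_implies (G : cnf) (D : clause) : Prop :=
  tautology D \/ up_refutes (restrict (neg_clause D) G).

Definition up_implies_all (G : cnf) (Ds : cnf) : Prop :=
  forall D, D \in Ds -> up_implies G D.

Definition tasg := var -> bool.
Definition cost (B : seq var) (t : tasg) : nat := \sum_(b <- undup B) (t b : nat).

Definition comp_tp (t : tasg) (s : pasg) : tasg :=
  fun x => match s x with Some b => b | None => t x end.

Definition extends (t : tasg) (a : pasg) : Prop :=
  forall x b, a x = Some b -> t x = b.

Definition cost_BC (B : seq var) (G : cnf) (C : clause) (l : lit) : Prop :=
  (forall G', G' \in G -> lneg l \in G' ->
     tautology (C ++ filter (fun m => m != lneg l) G'))
  /\ ~~ (l.2 && (l.1 \in B)).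

Definition cost_LPR (B : seq var) (G : cnf) (E : clause) : Prop :=
  exists s : pasg,
    (forall x, (s x == None) = (neg_clause E x == None)) /\
    (exists x, s x != neg_clause E x /\
       forall y, y != x -> s y = neg_clause E y) /\
    up_implies_all (restrict (neg_clause E) G) (restrict s (E :: G)) /\
    (forall t : tasg, extends t (neg_clause E) ->
       cost B (comp_tp t s) <= cost B t).

From mathcomp Require Import all_boot.
Set Implicit Arguments. Unset Strict Implicit. Unset Printing Implicit Defensive.

(* The witness [s] is [~(C \/ l)] with the variable of [l] flipped, so that
   it satisfies [l].  A clause of [Gamma] without [~l] cannot tell [s] from
   [~(C \/ l)] (a clause containing [l] is satisfied by [s]), so its
   restriction under [s] is already a clause of [Gamma|~(C \/ l)], unit-implied
   by membership.  A clause with [~l] is blocked: its resolvent with [C \/ l]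
   is a tautology, and the complementary pair either meets [C] (then [s]
   satisfies the clause) or lies inside the clause (then its restriction is a
   tautology).  The cost can only change at the variable of [l], which moves
   from [~l] to [l]; this is harmless as [l] is not a positive blocking
   literal. *)

Lemma lnegK : involutive lneg.
Proof. by case=> x b; rewrite /lneg /= negbK. Qed.

Lemma lit_val_lneg (a : pasg) (m : lit) :
  lit_val a (lneg m) = omap negb (lit_val a m).
Proof. by case: m => x b; rewrite /lit_val /lneg /=; case: (a x) => // -[]; case: b. Qed.

Lemma lneg_notin (E : clause) (m : lit) :
  ~~ tautology E -> m \in E -> lneg m \notin E.
Proof. by move=> /hasPn ntE /ntE. Qed.

Lemma neg_clause_var (E : clause) (m : lit) :
  ~~ tautology E -> m \in E -> neg_clause E m.1 = Some (~~ m.2).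
Proof.
move=> ntE mE; have := lneg_notin ntE mE.
case: m mE => x [] mE; rewrite /neg_clause /lneg /= => nmE; first by rewrite mE.
by rewrite (negbTE nmE) mE.
Qed.

Lemma lit_val_neg_clause (E : clause) (m : lit) :
  ~~ tautology E -> m \in E -> lit_val (neg_clause E) m = Some false.
Proof. by move=> ntE mE; rewrite /lit_val (neg_clause_var ntE mE); case: (m.2). Qed.

Lemma lit_val_neg_clause_lneg (E : clause) (m : lit) :
  ~~ tautology E -> lneg m \in E -> lit_val (neg_clause E) m = Some true.
Proof.
move=> ntE /(lit_val_neg_clause ntE); rewrite lit_val_lneg.
by case: lit_val => // -[].
Qed.

Lemma restrict_clause_sat (a : pasg) (D : clause) (m : lit) :
  m \in D -> lit_val a m = Some true -> restrict_clause a D = None.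
Proof. by move=> mD am; rewrite /restrict_clause; case: hasP => // -[]; exists m; rewrite ?am. Qed.

Lemma restrict_clause_taut (a : pasg) (D D' : clause) (m : lit) :
  m \in D -> lneg m \in D -> restrict_clause a D = Some D' -> tautology D'.
Proof.
move=> mD nmD; rewrite /restrict_clause; case: ifP => // /negbT /hasPn unsat [<-].
move: (unsat m mD) (unsat _ nmD); rewrite lit_val_lneg => m_unsat nm_unsat.
apply/hasP; exists m; rewrite !mem_filter ?mD ?nmD ?andbT ?lit_val_lneg;
  by case: (lit_val a m) m_unsat nm_unsat => [[]|].
Qed.

Lemma eq_in_restrict_clause (a b : pasg) (D : clause) :
  {in D, lit_val a =1 lit_val b} -> restrict_clause a D = restrict_clause b D.
Proof.
move=> eq_ab; rewrite /restrict_clause.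
rewrite (@eq_in_has _ _ (fun m => lit_val b m == Some true)) => [|m /eq_ab -> //].
by rewrite (@eq_in_filter _ _ (fun m => lit_val b m != Some false)) // => m /eq_ab ->.
Qed.

Lemma restrict_clause_neg_self (D : clause) :
  ~~ tautology D -> restrict_clause (neg_clause D) D = Some [::].
Proof.
move=> ntD; rewrite /restrict_clause; case: hasP => [[m mD]|_].
  by rewrite lit_val_neg_clause.
congr Some; rewrite -[RHS](filter_pred0 D); apply: eq_in_filter => m mD /=.
by rewrite lit_val_neg_clause.
Qed.

Lemma up_implies_mem (F : cnf) (D : clause) : D \in F -> up_implies F D.
Proof.
move=> DF; have [|ntD] := boolP (tautology D); [by left | right].
apply: up_conflict; rewrite mem_pmap; apply/mapP; exists D => //.
by rewrite restrict_clause_neg_self.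
Qed.

Definition set_lit (a : pasg) (l : lit) : pasg :=
  fun x => if x == l.1 then Some l.2 else a x.

Lemma lit_val_set_lit (a : pasg) (l : lit) : lit_val (set_lit a l) l = Some true.
Proof. by rewrite /lit_val /set_lit !eqxx. Qed.

Lemma lit_val_set_lit_other (a : pasg) (l m : lit) :
  m != l -> m != lneg l -> lit_val (set_lit a l) m = lit_val a m.
Proof.
case: m l => x b [y c]; rewrite /lit_val /set_lit /lneg /=.
by case: (x =P y) => [->|//]; case: b; case: c; rewrite ?eqxx.
Qed.

Lemma cost_comp_set_lit (B : seq var) (t : tasg) (a : pasg) (l : lit) :
  extends t a -> t l.1 = ~~ l.2 -> ~~ (l.2 && (l.1 \in B)) ->
  cost B (comp_tp t (set_lit a l)) <= cost B t.
Proof.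
move=> ta tl lB; rewrite /cost !big_seq; apply: leq_sum => b; rewrite mem_undup => bB.
rewrite /comp_tp /set_lit; case: eqP => [eb | _].
  by rewrite eb tl; move: lB; rewrite -eb bB andbT; case: (l.2).
by case ab: (a b) => [v|] //; rewrite (ta _ _ ab).
Qed.

Section FlipHead.

Variables (C : clause) (l : lit).
Hypothesis ntE : ~~ tautology (l :: C).

Local Notation nE := (neg_clause (l :: C)).
Local Notation s := (set_lit nE l).

Lemma lit_val_flip_lneg_mem (k : lit) :
  lneg k \in l :: C -> k != lneg l -> lit_val s k = Some true.
Proof.
move=> kE kl; have kl' : k != l.
  by apply: contraTneq kE => ->; apply: lneg_notin ntE (mem_head _ _).
by rewrite lit_val_set_lit_other // lit_val_neg_clause_lneg.
Qed.

Lemma flip_restrict_blocked (G' D : clause) :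
  tautology (C ++ filter (fun m => m != lneg l) G') ->
  restrict_clause s G' = Some D -> tautology D.
Proof.
have inE_C k : k \in C -> k \in l :: C by move=> kC; rewrite inE kC orbT.
move=> /hasP [m]; rewrite !mem_cat !mem_filter.
case/orP => [mC | /andP [ml mG]]; case/orP => [nmC | /andP [nml nmG]] sD.
- by have := lneg_notin ntE (inE_C _ mC); rewrite inE_C.
- suff: restrict_clause s G' = None by rewrite sD.
  apply: (restrict_clause_sat nmG); apply: lit_val_flip_lneg_mem nml.
  by rewrite lnegK inE_C.
- suff: restrict_clause s G' = None by rewrite sD.
  exact: (restrict_clause_sat mG) (lit_val_flip_lneg_mem (inE_C _ nmC) ml).
- exact: restrict_clause_taut mG nmG sD.
Qed.

Lemma flip_restrict_unblocked (G' D : clause) :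
  lneg l \notin G' -> restrict_clause s G' = Some D ->
  restrict_clause nE G' = Some D.
Proof.
move=> nlG sD; rewrite -sD; apply/esym/eq_in_restrict_clause => m mG.
apply: lit_val_set_lit_other; last by apply: contraNneq nlG => <-.
apply/eqP => ml; rewrite ml in mG.
by rewrite (restrict_clause_sat mG (lit_val_set_lit _ _)) in sD.
Qed.

Lemma flip_up_implies (G : cnf) :
  (forall G', G' \in G -> lneg l \in G' ->
     tautology (C ++ filter (fun m => m != lneg l) G')) ->
  up_implies_all (restrict nE G) (restrict s ((l :: C) :: G)).
Proof.
move=> blocked D; rewrite mem_pmap => /mapP [G' G'in /esym sD].
move: G'in; rewrite inE => /predU1P [eG | G'in].
  by rewrite eG (restrict_clause_sat (mem_head l C) (lit_val_set_lit _ _)) in sD.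
have [nlG | nlG] := boolP (lneg l \in G').
  by left; apply: flip_restrict_blocked (blocked _ G'in nlG) sD.
apply/up_implies_mem; rewrite mem_pmap; apply/mapP; exists G' => //.
by rewrite (flip_restrict_unblocked nlG sD).
Qed.

End FlipHead.

Theorem mainTheorem10 (B : seq var) (G : cnf) (C : clause) (l : lit) :
  ~~ tautology (l :: C) ->
  cost_BC B G C l -> cost_LPR B G (l :: C).
Proof.
move=> ntE [blocked nonblocking].
have nEl := neg_clause_var ntE (mem_head l C).
exists (set_lit (neg_clause (l :: C)) l); split; [|split; [|split]].
- by move=> x; rewrite /set_lit; case: (x =P l.1) => // ->; rewrite nEl.
- exists l.1; rewrite /set_lit eqxx nEl; split; first by case: (l.2).
  by move=> y /negbTE ->.
- exact: flip_up_implies.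
- by move=> t tE; apply: cost_comp_set_lit tE (tE _ _ nEl) nonblocking.
Qed.
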